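(* Let $A$ be an Archimedean semiprime $f$-algebra which is bounded quasi-inversion closed. Then every intermediate algebra in $A$ (i.e., every subalgebra $B$ of $A$ with $A_b\subseteq B$) is an order ideal of $A$; that is, if $a\in A$, $b\in B$ and $|a|\le |b|$, then $a\in B$.
   Context: An $f$-algebra is a real associative algebra that is a vector lattice with $A_+A_+\subseteq A_+$ and such that $a\wedge b=0$ implies $ac\wedge b=ca\wedge b=0$ for all $c\in A_+$. It is semiprime if $0$ is its only nilpotent element. An element $a\in A$ is quasi-invertible if there is $a^\ast\in A$ with $a+a^\ast=aa^\ast$; $Q(A)$ denotes the set of quasi-invertible elements. $A$ is called bounded quasi-inversion closed if for every $a\in A$, $|a|\le|a^2-a|$ implies $a\in Q(A)$. For $a\in A$, $A(a)=\{x\in A: |x|\le \mu|a| \text{ for some }\mu\in(0,\infty)\}$ is the principal order ideal generated by $a$. An element $a$ is bounded if $a^2\in A(a)$, i.e. $a^2\le\mu|a|$ for some $\mu\in(0,\infty)$; $A_b$ is the set of bounded elements. An intermediate algebra in $A$ is a subalgebra of $A$ containing $A_b$. An order ideal is a solid vector subspace. *)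

From HB Require Import structures.
From mathcomp Require Import all_boot all_order all_algebra.
From mathcomp Require Import reals.
Set Implicit Arguments. Unset Strict Implicit. Unset Printing Implicit Defensive.
Import Order.TTheory GRing.Theory Num.Theory.
Local Open Scope ring_scope.

(* A real f-algebra structure on a real vector space V (not assumed unital):
   an associative bilinear product [fmul], a vector-lattice order [fle] with
   binary supremum [fjoin] and infimum [fmeet], such that products of positive
   elements are positive and  a /\ b = 0  implies  ac /\ b = ca /\ b = 0 for c >= 0. *)
Record fAlgebra (R : realType) (V : lmodType R) := FAlgebra {
  fmul : V -> V -> V;
  fle : V -> V -> Prop;
  fjoin : V -> V -> V;
  fmeet : V -> V -> V;
  fmulA : forall a b c, fmul a (fmul b c) = fmul (fmul a b) c;
  fmulDl : forall a b c, fmul (a + b) c = fmul a c + fmul b c;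
  fmulDr : forall a b c, fmul a (b + c) = fmul a b + fmul a c;
  fmulZl : forall (k : R) a b, fmul (k *: a) b = k *: fmul a b;
  fmulZr : forall (k : R) a b, fmul a (k *: b) = k *: fmul a b;
  fle_refl : forall a, fle a a;
  fle_anti : forall a b, fle a b -> fle b a -> a = b;
  fle_trans : forall a b c, fle a b -> fle b c -> fle a c;
  fle_add : forall a b c, fle a b -> fle (a + c) (b + c);
  fle_scale : forall (k : R) a b, 0 <= k -> fle a b -> fle (k *: a) (k *: b);
  fjoin_ub1 : forall a b, fle a (fjoin a b);
  fjoin_ub2 : forall a b, fle b (fjoin a b);
  fjoin_least : forall a b c, fle a c -> fle b c -> fle (fjoin a b) c;
  fmeet_lb1 : forall a b, fle (fmeet a b) a;
  fmeet_lb2 : forall a b, fle (fmeet a b) b;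
  fmeet_greatest : forall a b c, fle c a -> fle c b -> fle c (fmeet a b);
  fmul_pos : forall a b, fle 0 a -> fle 0 b -> fle 0 (fmul a b);
  fmeet_mul : forall a b c, fmeet a b = 0 -> fle 0 c ->
    fmeet (fmul a c) b = 0 /\ fmeet (fmul c a) b = 0
}.

Section FAlgebraDefs.
Variables (R : realType) (V : lmodType R) (A : fAlgebra V).

Definition fabs (a : V) : V := fjoin A a (- a).

(* a^(n+1) *)
Fixpoint fpowS (a : V) (n : nat) : V :=
  match n with O => a | S m => fmul A a (fpowS a m) end.

Definition archimedean : Prop :=
  forall a b, fle A 0 a -> fle A 0 b ->
    (forall n : nat, fle A (a *+ n) b) -> a = 0.

Definition semiprime : Prop :=
  forall a, (exists n : nat, fpowS a n = 0) -> a = 0.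

Definition quasi_invertible (a : V) : Prop :=
  exists a' : V, a + a' = fmul A a a'.

Definition bqi_closed : Prop :=
  forall a, fle A (fabs a) (fabs (fmul A a a - a)) -> quasi_invertible a.

Definition in_principal_ideal (a x : V) : Prop :=
  exists mu : R, 0 < mu /\ fle A (fabs x) (mu *: fabs a).

Definition bounded (a : V) : Prop := in_principal_ideal a (fmul A a a).

Definition subalgebra (B : V -> Prop) : Prop :=
  [/\ B 0,
      (forall x y, B x -> B y -> B (x + y)),
      (forall (k : R) x, B x -> B (k *: x)) &
      (forall x y, B x -> B y -> B (fmul A x y))].

Definition intermediate_algebra (B : V -> Prop) : Prop :=
  subalgebra B /\ (forall a, bounded a -> B a).

End FAlgebraDefs.

(* For 0 <= a <= p with p^2 in B, put y = (1 + p^2)^-1 a. It exists because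
   bounded quasi-inversion closedness makes every 1 + c with c >= 0 surjective,
   and it is positive because in a semiprime f-algebra (1 + c) y >= 0 forces
   y >= 0. Since (1 - p + p^2)(1 + p) = 1 + p^3, the element (1 - p + p^2) a is
   positive, which gives p y <= a; then (1 + p^2)(y - y^2) = a - a y >= 0, so
   y^2 <= y. Thus y is bounded, hence y is in B, and so is a = y + p^2 y.
   Applied with p = |b| to the positive and negative parts of a, this shows
   that B is an order ideal. *)
From Pilot Require Import Defs.
From HB Require Import structures.
From mathcomp Require Import all_boot all_order all_algebra.
From mathcomp Require Import reals.
Set Implicit Arguments. Unset Strict Implicit. Unset Printing Implicit Defensive.
Import Order.TTheory GRing.Theory Num.Theory.
Local Open Scope ring_scope.

Section FAlgebraTheory.
Variables (R : realType) (V : lmodType R) (A : fAlgebra V).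

Local Notation "x ⊑ y" := (fle A x y) (at level 70).
Local Notation "x ⋅ y" := (fmul A x y) (at level 40, left associativity).
Local Notation fabs := (fabs A).

Lemma fsubr_ge0 u v : 0 ⊑ v - u <-> u ⊑ v.
Proof.
split=> h.
- by have := fle_add u h; rewrite add0r subrK.
- by have := fle_add (- u) h; rewrite addrN.
Qed.

Lemma fleD u v u' v' : u ⊑ v -> u' ⊑ v' -> u + u' ⊑ v + v'.
Proof.
move=> h h'; apply: (fle_trans (fle_add u' h)).
by rewrite !(addrC v); apply: fle_add.
Qed.

Lemma faddr_ge0 u v : 0 ⊑ u -> 0 ⊑ v -> 0 ⊑ u + v.
Proof. by move=> hu hv; have := fleD hu hv; rewrite addr0. Qed.

Lemma fleN u v : u ⊑ v -> - v ⊑ - u.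
Proof. by move=> /fsubr_ge0 h; apply/fsubr_ge0; rewrite opprK addrC. Qed.

Lemma fge0_le u : 0 ⊑ u -> - u ⊑ u.
Proof. by move=> h; have := fleN h; rewrite oppr0 => /fle_trans; apply. Qed.

Lemma fjoinC u v : fjoin A u v = fjoin A v u.
Proof. by apply: fle_anti; apply: fjoin_least; apply: fjoin_ub1 || apply: fjoin_ub2. Qed.

Lemma fmeetC u v : fmeet A u v = fmeet A v u.
Proof. by apply: fle_anti; apply: fmeet_greatest; apply: fmeet_lb1 || apply: fmeet_lb2. Qed.

Lemma fmeetxx u : fmeet A u u = u.
Proof. by apply: fle_anti; [apply: fmeet_lb1 | apply: fmeet_greatest; apply: fle_refl]. Qed.

Lemma fmeetDl u v w : fmeet A u v + w = fmeet A (u + w) (v + w).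
Proof.
apply: fle_anti.
  by apply: fmeet_greatest; apply: fle_add; [apply: fmeet_lb1 | apply: fmeet_lb2].
rewrite -[fmeet A (u + w) _](subrK w); apply: fle_add.
by apply: fmeet_greatest; rewrite -[X in _ ⊑ X](addrK w);
  apply: fle_add; [apply: fmeet_lb1 | apply: fmeet_lb2].
Qed.

Lemma foppr_join u v : - fjoin A u v = fmeet A (- u) (- v).
Proof.
apply: fle_anti.
  by apply: fmeet_greatest; apply: fleN; [apply: fjoin_ub1 | apply: fjoin_ub2].
rewrite -[fmeet A _ _]opprK; apply: fleN; apply: fjoin_least;
  rewrite -[X in X ⊑ _]opprK; apply: fleN; [apply: fmeet_lb1 | apply: fmeet_lb2].
Qed.

Lemma fjoinDmeet u v : fjoin A u v + fmeet A u v = u + v.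
Proof.
have -> : fmeet A u v = fmeet A (- v + (u + v)) (- u + (u + v)).
  by rewrite addrCA addNr addr0 addrA addNr add0r.
by rewrite -fmeetDl -foppr_join (fjoinC v) addrA subrr add0r.
Qed.

Lemma fabs_id u : 0 ⊑ u -> fabs u = u.
Proof.
move=> h; apply: fle_anti; last exact: fjoin_ub1.
by apply: fjoin_least; [apply: fle_refl | apply: fge0_le].
Qed.

Lemma fabs_ge0 u : 0 ⊑ fabs u.
Proof.
have h2 : 0 ⊑ fabs u + fabs u.
  by rewrite -(subrr u) addrC; apply: fleD; [apply: fjoin_ub2 | apply: fjoin_ub1].
have half_ge0 : 0 <= 2^-1 :> R by rewrite invr_ge0 ler0n.
have := fle_scale half_ge0 h2.
by rewrite scaler0 -mulr2n -scaler_nat scalerA mulVf ?pnatr_eq0 ?scale1r.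
Qed.

Definition fpos u := fjoin A u 0.
Definition fneg u := fjoin A (- u) 0.

Lemma fpos_ge0 u : 0 ⊑ fpos u. Proof. exact: fjoin_ub2. Qed.
Lemma fneg_ge0 u : 0 ⊑ fneg u. Proof. exact: fjoin_ub2. Qed.

Lemma fpos_le_abs u : fpos u ⊑ fabs u.
Proof. by apply: fjoin_least; [apply: fjoin_ub1 | apply: fabs_ge0]. Qed.

Lemma fneg_le_abs u : fneg u ⊑ fabs u.
Proof. by apply: fjoin_least; [apply: fjoin_ub2 | apply: fabs_ge0]. Qed.

Lemma fpos_subneg u : fpos u - fneg u = u.
Proof. by rewrite /fneg foppr_join opprK oppr0 /fpos fjoinDmeet addr0. Qed.

Lemma fmeet_pos_neg u : fmeet A (fpos u) (fneg u) = 0.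
Proof.
have fneg_meet : fneg u = - fmeet A u 0.
  by apply: oppr_inj; rewrite opprK foppr_join opprK oppr0.
apply: (addIr (- fneg u)).
by rewrite fmeetDl subrr add0r fpos_subneg fneg_meet opprK.
Qed.

Lemma fabs_pos_neg u : fabs u = fpos u + fneg u.
Proof.
rewrite -[RHS]fjoinDmeet fmeet_pos_neg addr0.
apply: fle_anti; last by apply: fjoin_least; [apply: fpos_le_abs | apply: fneg_le_abs].
apply: fjoin_least.
  by apply: fle_trans (fjoin_ub1 _ _ _); apply: fjoin_ub1.
by apply: fle_trans (fjoin_ub2 _ _ _); apply: fjoin_ub1.
Qed.

Lemma fmul0l u : 0 ⋅ u = 0.
Proof. by apply: (addIr (0 ⋅ u)); rewrite -fmulDl !add0r. Qed.

Lemma fmul0r u : u ⋅ 0 = 0.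
Proof. by apply: (addIr (u ⋅ 0)); rewrite -fmulDr !add0r. Qed.

Lemma fmulNl u v : (- u) ⋅ v = - (u ⋅ v).
Proof. by apply: (addIr (u ⋅ v)); rewrite -fmulDl !addNr fmul0l. Qed.

Lemma fmulNr u v : u ⋅ (- v) = - (u ⋅ v).
Proof. by apply: (addIr (u ⋅ v)); rewrite -fmulDr !addNr fmul0r. Qed.

Lemma fmulBl u v w : (u - v) ⋅ w = u ⋅ w - v ⋅ w.
Proof. by rewrite fmulDl fmulNl. Qed.

Lemma fmulBr u v w : u ⋅ (v - w) = u ⋅ v - u ⋅ w.
Proof. by rewrite fmulDr fmulNr. Qed.

Lemma fmul_ler c u v : 0 ⊑ c -> u ⊑ v -> u ⋅ c ⊑ v ⋅ c.
Proof. by move=> hc /fsubr_ge0 h; apply/fsubr_ge0; rewrite -fmulBl; apply: fmul_pos. Qed.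

Lemma fmul_meet0 u v : 0 ⊑ u -> 0 ⊑ v -> fmeet A u v = 0 -> u ⋅ v = 0.
Proof.
move=> hu hv huv; have [huv' _] := fmeet_mul huv hv.
by have [_] := fmeet_mul (etrans (fmeetC _ _) huv') hu; rewrite fmeetxx.
Qed.

Lemma fsqr_abs u : fabs u ⋅ fabs u = u ⋅ u.
Proof.
have PN : fpos u ⋅ fneg u = 0.
  by apply: fmul_meet0; [apply: fpos_ge0 | apply: fneg_ge0 | apply: fmeet_pos_neg].
have NP : fneg u ⋅ fpos u = 0.
  by apply: fmul_meet0; [apply: fneg_ge0 | apply: fpos_ge0 | rewrite fmeetC fmeet_pos_neg].
rewrite fabs_pos_neg -[in RHS](fpos_subneg u).
by rewrite fmulDl fmulBl !fmulDr !fmulNr PN NP !oppr0 !addr0 !add0r opprK.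
Qed.

(* [A] need not be unital: [one_plus c y] stands for [(1 + c) y]. *)
Definition one_plus c y := y + c ⋅ y.

Lemma one_plusB c u v : one_plus c (u - v) = one_plus c u - one_plus c v.
Proof. by rewrite /one_plus fmulBr opprD addrACA. Qed.

Lemma one_plus_mull c y z : one_plus c (y ⋅ z) = one_plus c y ⋅ z.
Proof. by rewrite /one_plus fmulA fmulDl. Qed.

Lemma one_plus_sqr_mul p y : one_plus (p ⋅ p) (p ⋅ y) = p ⋅ one_plus (p ⋅ p) y.
Proof. by rewrite /one_plus fmulDr !fmulA. Qed.

Section SemiprimeBqi.
Hypotheses (sp : semiprime A) (bq : bqi_closed A).

(* Multiplying by [fneg y] kills [fpos y], so [(1 + c) y] turns into
   [- (1 + c) (fneg y)^2], which is both positive and negative. *)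
Lemma one_plus_ge0 c y : 0 ⊑ c -> 0 ⊑ one_plus c y -> 0 ⊑ y.
Proof.
move=> hc hy; set N := fneg y.
have PN : fpos y ⋅ N = 0.
  by apply: fmul_meet0; [apply: fpos_ge0 | apply: fneg_ge0 | apply: fmeet_pos_neg].
have yN : y ⋅ N = - (N ⋅ N) by rewrite -{1}(fpos_subneg y) fmulBl PN sub0r.
have NN_ge0 : 0 ⊑ N ⋅ N by apply: fmul_pos; apply: fneg_ge0.
have NN_le0 : N ⋅ N ⊑ 0.
  have := fmul_pos hy (fneg_ge0 y).
  rewrite -one_plus_mull yN /one_plus fmulNr -opprD => /fleN; rewrite opprK oppr0.
  by apply: fle_trans; rewrite -[X in X ⊑ _]addr0; apply: fleD (fle_refl _ _) (fmul_pos _ _).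
have N0 : N = 0 by apply: sp; exists 1%N; exact: fle_anti NN_le0 NN_ge0.
by rewrite -(fpos_subneg y) -/N N0 subr0; apply: fpos_ge0.
Qed.

Lemma one_plus_onto c g : 0 ⊑ c -> exists y, one_plus c y = g.
Proof.
move=> hc.
have [x hx] : quasi_invertible A (- c).
  apply: bq; rewrite fmulNl fmulNr opprK opprK /Defs.fabs opprK fjoinC.
  rewrite -/(fabs c) -/(fabs (c ⋅ c + c)) fabs_id // fabs_id.
    by apply/fsubr_ge0; rewrite addrK; apply: fmul_pos.
  by apply: faddr_ge0 => //; apply: fmul_pos.
have cx : c ⋅ x = c - x by rewrite -[c ⋅ x]opprK -fmulNl -hx opprD opprK addrC.
exists (g - x ⋅ g).
by rewrite /one_plus fmulBr fmulA cx fmulBl subKr subrK.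
Qed.

(* [(1 - p + p^2)(1 + p) = 1 + p^3] *)
Lemma mul_quadratic_ge0 p a : 0 ⊑ p -> 0 ⊑ a -> 0 ⊑ a - p ⋅ a + p ⋅ (p ⋅ a).
Proof.
move=> hp ha; have [w hw] := one_plus_onto a hp.
have w_ge0 : 0 ⊑ w by apply: (one_plus_ge0 hp); rewrite hw.
rewrite -hw /one_plus !fmulDr addrKA subrKA.
by apply: faddr_ge0 => //; do 3!apply: fmul_pos => //.
Qed.

Variable B : V -> Prop.
Hypothesis hB : intermediate_algebra A B.

Lemma intermediate_algebra_interval p a :
  0 ⊑ p -> B (p ⋅ p) -> 0 ⊑ a -> a ⊑ p -> B a.
Proof.
move=> hp Bpp ha hap; have [[_ BD _ BM] Bbounded] := hB.
have s_ge0 : 0 ⊑ p ⋅ p by apply: fmul_pos.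
have [y hy] := one_plus_onto a s_ge0.
have y_ge0 : 0 ⊑ y by apply: (one_plus_ge0 s_ge0); rewrite hy.
have py_le_a : p ⋅ y ⊑ a.
  apply/fsubr_ge0; apply: (one_plus_ge0 s_ge0).
  rewrite one_plusB one_plus_sqr_mul hy /one_plus -fmulA addrAC.
  exact: mul_quadratic_ge0.
have yy_le_y : y ⋅ y ⊑ y.
  apply/fsubr_ge0; apply: (one_plus_ge0 s_ge0).
  rewrite one_plusB one_plus_mull hy; apply/fsubr_ge0.
  exact: fle_trans (fmul_ler y_ge0 hap) py_le_a.
have By : B y.
  apply: Bbounded; exists 1; split; first exact: ltr01.
  by rewrite scale1r fabs_id ?fabs_id //; apply: fmul_pos.
by rewrite -hy; apply: BD => //; apply: BM.
Qed.

End SemiprimeBqi.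

End FAlgebraTheory.

Theorem theorem8 (R : realType) (V : lmodType R) (A : fAlgebra V) :
  archimedean A -> semiprime A -> bqi_closed A ->
  forall B : V -> Prop, intermediate_algebra A B ->
  forall a b : V, B b -> fle A (fabs A a) (fabs A b) -> B a.
Proof.
move=> _ sp bq B hB a b Bb hab; have [[_ BD BZ BM] _] := hB.
have Bbb : B (fmul A (fabs A b) (fabs A b)) by rewrite fsqr_abs; apply: BM.
have Bpart u : fle A 0 u -> fle A u (fabs A a) -> B u.
  move=> hu hua; apply: (intermediate_algebra_interval sp bq hB (fabs_ge0 A b) Bbb hu).
  exact: fle_trans hua hab.
rewrite -(fpos_subneg A a) -scaleN1r; apply: BD; last apply: BZ.
  by apply: Bpart; [apply: fpos_ge0 | apply: fpos_le_abs].
by apply: Bpart; [apply: fneg_ge0 | apply: fneg_le_abs].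
Qed.
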